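(* (a) Fix an input distribution $p\in\Delta_m$ and define, for $P$ in the set $\Delta_{n\times m}$ of $n\times m$ nonnegative matrices with entries summing to $1$, $$I_c(P)=\sum_{j=1}^m\sum_{i=1}^nP_{ij}\log\Big(\frac{P_{ij}}{\sum_{k=1}^m p_jP_{ik}}\Big).$$ Then $I_c$ is $1$-smooth relative to the negative Shannon entropy $-H$ on $\Delta_{n\times m}$. (b) Fix an input state $\rho_A\in\mathcal{D}(\mathcal{H}_A)$ and define, for $\rho_{BR}\in\mathcal{D}(\mathcal{H}_B\otimes\mathcal{H}_R)$, $$I_q(\rho_{BR})=S(\rho_A)+S(\operatorname{tr}_R(\rho_{BR}))-S(\rho_{BR}).$$ Then $I_q$ is $1$-smooth relative to the negative von Neumann entropy $-S$ on $\mathcal{D}(\mathcal{H}_B\otimes\mathcal{H}_R)$.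
   Context: $H(x)=-\sum_i x_i\log x_i$ (applied entrywise to matrices); $S(\rho)=-\operatorname{tr}[\rho\log\rho]$; $\mathcal{D}(\cdot)$ denotes density matrices and $\operatorname{tr}_R$ the partial trace over $\mathcal{H}_R$. A function $f$ is $L$-smooth relative to a Legendre function $\varphi$ on a convex set $\mathcal{C}$ if $L\varphi-f$ is convex on the relative interior of $\mathcal{C}$. *)

From HB Require Import structures.
From mathcomp Require Import all_boot all_order all_algebra.
From mathcomp Require Import classical_sets reals exp.
From mathcomp Require Import complex mxtens.
Set Implicit Arguments. Unset Strict Implicit. Unset Printing Implicit Defensive.
Import Order.TTheory GRing.Theory Num.Theory Num.Def.
Local Open Scope ring_scope.
Local Open Scope classical_set_scope.

(* V is a vector space over K; real scalars act through emb : R -> K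
   (emb = id for real spaces, emb = (fun t => t%:C) for complex spaces). *)

Definition convex_on (R : realType) (K : pzRingType) (V : lmodType K)
    (emb : R -> K) (S : set V) (g : V -> R) : Prop :=
  forall x y, S x -> S y -> forall t : R, 0 <= t -> t <= 1 ->
    g (emb t *: x + emb (1 - t) *: y) <= t * g x + (1 - t) * g y.

(* relative interior of a convex set C (Rockafellar, Thm 6.4):
   x in C such that every segment [y, x] in C can be prolonged beyond x in C *)
Definition relint (R : realType) (K : pzRingType) (V : lmodType K)
    (emb : R -> K) (C : set V) : set V :=
  [set x | C x /\ forall y, C y -> exists2 e : R, 0 < e & C (x + emb e *: (x - y))].

Definition rel_smooth (R : realType) (K : pzRingType) (V : lmodType K)
    (emb : R -> K) (L : R) (phi f : V -> R) (C : set V) : Prop :=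
  convex_on emb (relint emb C) (fun x => L * phi x - f x).

Definition prob_vec (R : realType) (m : nat) : set 'rV[R]_m :=
  [set p | (forall j, 0 <= p ord0 j) /\ \sum_(j < m) p ord0 j = 1].

Definition prob_mx (R : realType) (n m : nat) : set 'M[R]_(n, m) :=
  [set P | (forall i j, 0 <= P i j) /\ \sum_(i < n) \sum_(j < m) P i j = 1].

Definition shannonH (R : realType) (n m : nat) (P : 'M[R]_(n, m)) : R :=
  - \sum_(i < n) \sum_(j < m) P i j * ln (P i j).

Definition Ic (R : realType) (n m : nat) (p : 'rV[R]_m) (P : 'M[R]_(n, m)) : R :=
  \sum_(j < m) \sum_(i < n)
     P i j * ln (P i j / \sum_(k < m) p ord0 j * P i k).

Local Open Scope complex_scope.

Definition cplx (R : realType) (t : R) : R[i] := t%:C.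

Definition density (R : realType) (N : nat) : set 'M[R[i]]_N :=
  [set rho | (map_mx conjC rho)^T = rho
           /\ (forall v : 'rV[R[i]]_N, 0 <= (v *m rho *m (map_mx conjC v)^T) ord0 ord0)
           /\ \tr rho = 1].

(* matrix logarithm via the spectral decomposition rho = U^-1 diag(l) U
   (log applied to the (real) eigenvalues; convention log 0 = 0 of ln) *)
Definition mxlog (R : realType) (N : nat) (rho : 'M[R[i]]_N) : 'M[R[i]]_N :=
  invmx (spectralmx rho)
    *m diag_mx (\row_j ((ln (complex.Re (spectral_diag rho ord0 j)))%:C))
    *m spectralmx rho.

Definition vnS (R : realType) (N : nat) (rho : 'M[R[i]]_N) : R :=
  - complex.Re (\tr (rho *m mxlog rho)).

(* partial trace over H_R of an operator on H_B (x) H_R; the index of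
   H_B (x) H_R is encoded by mxtens_index (same convention as tensmx) *)
Definition ptraceR (R : realType) (b r : nat) (rho : 'M[R[i]]_(b * r)) : 'M[R[i]]_b :=
  \matrix_(i, i') \sum_(k < r) rho (mxtens_index (i, k)) (mxtens_index (i', k)).

Definition Iq (R : realType) (a b r : nat) (rhoA : 'M[R[i]]_a)
    (rho : 'M[R[i]]_(b * r)) : R :=
  vnS rhoA + vnS (ptraceR rho) - vnS rho.

From HB Require Import structures.
From mathcomp Require Import all_boot all_order all_algebra.
From mathcomp Require Import classical_sets reals exp.
From mathcomp Require Import complex mxtens.
From mathcomp Require Import ring lra.
Set Implicit Arguments.
Unset Strict Implicit.
Unset Printing Implicit Defensive.
Import Order.TTheory GRing.Theory Num.Theory Num.Def.
Local Open Scope ring_scope.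
Local Open Scope classical_set_scope.
Local Open Scope sesquilinear_scope.

(* On strictly positive matrices with row sums [r_i], the gap
   [-H(P) - I_c(P)] equals
     [sum_i (sum_(p_j > 0) P_ij log p_j + sum_(p_j = 0) P_ij log (P_ij / r_i) + r_i log r_i)],
   a linear term plus perspectives of [x log x] plus [x log x] of a linear map;
   all of these are convex by the log-sum inequality, and the relative interior
   of the simplex consists of strictly positive matrices.
   Part (b).  [-S(rho) - I_q(rho) = -S(rho_A) - S(tr_R rho)], so it suffices that
   [tr_R] is linear and positive and that [S] is concave.  For a mixture
   [M = t X + (1 - t) Y] with eigenbasis [U], the eigenvalues of [M] are the
   diagonal of [U M U^*], which is linear in [M]; and for any unitary [V] the
   diagonal of [V X V^*] is the image of the spectrum of [X] under the doubly
   stochastic matrix [|V U_X^*|^2], so by Jensen's inequality for [x log x] its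
   Shannon entropy is at least [S(X)]. *)

Lemma convex_on_subset (R : realType) (K : pzRingType) (V : lmodType K) (emb : R -> K)
    (S S' : set V) (g : V -> R) :
  S' `<=` S -> convex_on emb S g -> convex_on emb S' g.
Proof. by move=> S'S g_cvx x y /S'S Sx /S'S Sy; apply: g_cvx. Qed.

Section EntropyFunctions.
Variable R : realType.
Implicit Types a b t x : R.

Definition xlnx x := x * ln x.

Definition relent a b := a * ln (a / b).

Lemma relent1 a : relent a 1 = xlnx a.
Proof. by rewrite /relent divr1. Qed.

Lemma relentZ t a b : 0 <= t -> relent (t * a) (t * b) = t * relent a b.
Proof.
rewrite le_eqVlt => /orP[/eqP<-|t_gt0]; first by rewrite /relent !mul0r.
by rewrite /relent invfM mulrACA divff ?gt_eqF // mul1r mulrA.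
Qed.

Lemma log_sum_ineq (I : finType) (a b : I -> R) :
  (forall i, 0 <= a i) -> (forall i, 0 <= b i) -> (forall i, b i = 0 -> a i = 0) ->
  relent (\sum_i a i) (\sum_i b i) <= \sum_i relent (a i) (b i).
Proof.
move=> a_ge0 b_ge0 ab; rewrite /relent.
set A := \sum_i a i; set B := \sum_i b i.
have [B0|B_gt0] := eqVneq B 0.
  have b0 i : b i = 0 by apply: (psumr_eq0P (fun i _ => b_ge0 i) B0).
  by rewrite /A !big1 ?mul0r // => i _; rewrite ab ?mul0r.
have {}B_gt0 : 0 < B by rewrite lt_def B_gt0 sumr_ge0.
(* sum the termwise bounds [ln w <= w - 1] at [w = (A b_i) / (B a_i)] *)
suff termwise i : a i - b i * (A / B) <= a i * ln (a i / b i) - a i * ln (A / B).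
  have := ler_sum (index_enum I) (fun i (_ : true) => termwise i).
  rewrite !sumrB -!mulr_suml -/A -/B mulrC divfK ?gt_eqF // subrr.
  by rewrite subr_ge0.
have [ai0|ai_gt0] := eqVneq (a i) 0.
  by rewrite ai0 !mul0r subrr sub0r oppr_le0 mulr_ge0 ?divr_ge0 ?sumr_ge0.
have {}ai_gt0 : 0 < a i by rewrite lt_def ai_gt0 a_ge0.
have bi_gt0 : 0 < b i.
  rewrite lt_def b_ge0 andbT; apply/eqP => /ab ai0.
  by move: ai_gt0; rewrite ai0 ltxx.
have A_gt0 : 0 < A by apply: lt_le_trans ai_gt0 _; rewrite /A (bigD1 i) //= lerDl sumr_ge0.
set w := A * b i / (B * a i).
have w_gt0 : 0 < w by rewrite divr_gt0 // mulr_gt0.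
have ln_w : ln w <= w - 1.
  by have := @le_ln1Dx R (w - 1); rewrite subrKC; apply; lra.
have aw : a i * w = b i * (A / B) by rewrite /w; field; rewrite !gt_eqF.
have -> : a i * ln (a i / b i) - a i * ln (A / B) = - (a i * ln w).
  rewrite /w !ln_div ?lnM ?posrE ?mulr_gt0 //; ring.
have := ler_wpM2l (ltW ai_gt0) ln_w; rewrite mulrBr mulr1 aw; lra.
Qed.

Lemma relent_convex a a' b b' t : 0 <= a -> 0 <= a' -> 0 < b -> 0 < b' ->
  0 <= t -> t <= 1 ->
  relent (t * a + (1 - t) * a') (t * b + (1 - t) * b')
    <= t * relent a b + (1 - t) * relent a' b'.
Proof.
move=> a_ge0 a'_ge0 b_gt0 b'_gt0 t_ge0 t_le1.
have t'_ge0 : 0 <= 1 - t by rewrite subr_ge0.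
have := @log_sum_ineq bool (fun c : bool => if c then t * a else (1 - t) * a')
                            (fun c : bool => if c then t * b else (1 - t) * b').
rewrite !big_bool /= -relentZ // -[(1 - t) * relent _ _]relentZ //; apply.
- by case; apply: mulr_ge0.
- by case; apply: mulr_ge0 => //; apply: ltW.
- case=> /eqP; rewrite mulf_eq0 ?(gt_eqF b_gt0) ?(gt_eqF b'_gt0) orbF.
  + by move=> /eqP->; rewrite mul0r.
  + by move=> /eqP->; rewrite mul0r.
Qed.

Lemma xlnx_convex a b t : 0 <= a -> 0 <= b -> 0 <= t -> t <= 1 ->
  xlnx (t * a + (1 - t) * b) <= t * xlnx a + (1 - t) * xlnx b.
Proof.
move=> a_ge0 b_ge0 t_ge0 t_le1; rewrite -!relent1.
have := relent_convex a_ge0 b_ge0 ltr01 ltr01 t_ge0 t_le1.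
by rewrite !mulr1 subrKC.
Qed.

Lemma xlnx_jensen (I : finType) (w x : I -> R) :
  (forall i, 0 <= w i) -> \sum_i w i = 1 -> (forall i, 0 <= x i) ->
  xlnx (\sum_i w i * x i) <= \sum_i w i * xlnx (x i).
Proof.
move=> w_ge0 w1 x_ge0.
have relent_wx i : relent (w i * x i) (w i) = w i * xlnx (x i).
  by rewrite -[in X in relent _ X](mulr1 (w i)) relentZ ?relent1.
rewrite -relent1 -w1 -(eq_bigr _ (fun i _ => relent_wx i)).
by apply: log_sum_ineq => // [i|i ->]; [exact: mulr_ge0 | rewrite mul0r].
Qed.

Lemma xlnx_doubly_stochastic (I : finType) (B : I -> I -> R) (x : I -> R) :
  (forall k l, 0 <= B k l) -> (forall k, \sum_l B k l = 1) -> (forall l, \sum_k B k l = 1) ->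
  (forall l, 0 <= x l) -> \sum_k xlnx (\sum_l B k l * x l) <= \sum_l xlnx (x l).
Proof.
move=> B_ge0 rows1 cols1 x_ge0.
have jensen k : xlnx (\sum_l B k l * x l) <= \sum_l B k l * xlnx (x l).
  exact: xlnx_jensen.
apply: le_trans (ler_sum _ (fun k _ => jensen k)) _.
by rewrite exchange_big; under eq_bigr => l _ do rewrite -mulr_suml cols1 mul1r.
Qed.

End EntropyFunctions.

Section ClassicalCapacity.
Variables (R : realType) (n m : nat) (p : 'rV[R]_m).
Implicit Types P Q : 'M[R]_(n, m).

Definition rowsum P i := \sum_j P i j.

Lemma rowsum_gt0 P i j : (forall k, 0 <= P i k) -> 0 < P i j -> 0 < rowsum P i.
Proof.
move=> P_ge0 Pij_gt0; apply: lt_le_trans Pij_gt0 _.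
by rewrite /rowsum (bigD1 j) //= lerDl sumr_ge0.
Qed.

Definition negH_Ic_term (c a r : R) := if 0 < c then a * ln c else relent a r.

Lemma relint_prob_mx_gt0 P : relint (fun t => t) (@prob_mx R n m) P -> forall i j, 0 < P i j.
Proof.
move=> [_ P_ext] i0 j0.
have delta_prob : prob_mx (delta_mx i0 j0 : 'M[R]_(n, m)).
  split=> [i j|]; first by rewrite mxE.
  rewrite (bigD1 i0) //= [X in _ + X]big1 => [|i /negbTE ne_i]; last first.
    by rewrite big1 // => j _; rewrite mxE ne_i.
  rewrite addr0 (bigD1 j0) //= [X in _ + X]big1 => [|j /negbTE ne_j]; last first.
    by rewrite mxE ne_j andbF.
  by rewrite mxE !eqxx addr0.
(* prolonging the segment from the vertex [delta_mx i0 j0] beyond [P] stays nonnegative *)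
have [e e_gt0 [/(_ i0 j0) ext_ge0 _]] := P_ext _ delta_prob.
by move: ext_ge0; rewrite !mxE !eqxx /=; nra.
Qed.

(* For [c <= 0] the library's [ln] of the nonpositive ratio [a / (c * r)] is [0]:
   the summand of [Ic] vanishes and the [relent] branch is what is left of [-H]. *)
Lemma negH_sub_Ic_decomp P : (forall i j, 0 < P i j) ->
  1 * - shannonH P - Ic p P =
  \sum_i (\sum_j negH_Ic_term (p ord0 j) (P i j) (rowsum P i) + xlnx (rowsum P i)).
Proof.
move=> P_gt0; rewrite /shannonH /Ic mul1r opprK [X in _ - X]exchange_big -sumrB.
apply: eq_bigr => i _; rewrite /xlnx {2}/rowsum mulr_suml -sumrB -big_split.
apply: eq_bigr => j _ /=; rewrite -mulr_sumr -/(rowsum P i).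
have Pij_gt0 := P_gt0 i j.
have r_gt0 : 0 < rowsum P i by apply: (@rowsum_gt0 _ _ j) => // k; apply: ltW.
rewrite /negH_Ic_term /relent; case: ifP => c_gt0.
  rewrite !ln_div ?lnM ?posrE ?mulr_gt0 //; ring.
rewrite [ln (_ / (_ * _))]ln0 ?ln_div ?posrE //; first ring.
by rewrite pmulr_rle0 ?invr_le0 ?pmulr_lle0 // leNgt c_gt0.
Qed.

Lemma negH_Ic_term_convex (c a a' r r' t : R) : 0 <= a -> 0 <= a' -> 0 < r -> 0 < r' ->
  0 <= t -> t <= 1 ->
  negH_Ic_term c (t * a + (1 - t) * a') (t * r + (1 - t) * r')
    <= t * negH_Ic_term c a r + (1 - t) * negH_Ic_term c a' r'.
Proof.
by rewrite /negH_Ic_term; case: ifP => _ *; [nra | exact: relent_convex].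
Qed.

Lemma negH_sub_Ic_convex_gt0 :
  convex_on (fun t => t) [set P : 'M[R]_(n, m) | forall i j, 0 < P i j]
    (fun P => 1 * - shannonH P - Ic p P).
Proof.
move=> P Q /= P_gt0 Q_gt0 t t_ge0 t_le1.
set z := t *: P + (1 - t) *: Q.
have zE i j : z i j = t * P i j + (1 - t) * Q i j by rewrite !mxE.
have P_ge0 i j : 0 <= P i j := ltW (P_gt0 i j).
have Q_ge0 i j : 0 <= Q i j := ltW (Q_gt0 i j).
have z_gt0 i j : 0 < z i j.
  by rewrite zE; have := P_gt0 i j; have := Q_gt0 i j; nra.
have rowsumE i : rowsum z i = t * rowsum P i + (1 - t) * rowsum Q i.
  by rewrite /rowsum !mulr_sumr -big_split; apply: eq_bigr => j _; rewrite zE.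
rewrite !negH_sub_Ic_decomp // !mulr_sumr -big_split /=; apply: ler_sum => i _.
rewrite !mulrDr addrACA; apply: lerD.
  rewrite !mulr_sumr -big_split /=; apply: ler_sum => j _.
  by rewrite zE rowsumE; apply: negH_Ic_term_convex; rewrite // (@rowsum_gt0 _ _ j).
by rewrite rowsumE; apply: xlnx_convex; rewrite // sumr_ge0.
Qed.

Lemma Ic_rel_smooth : rel_smooth (fun t => t) 1 (fun P : 'M[R]_(n, m) => - shannonH P)
  (Ic p) (@prob_mx R n m).
Proof. exact: convex_on_subset relint_prob_mx_gt0 negH_sub_Ic_convex_gt0. Qed.

End ClassicalCapacity.

Section QuantumCapacity.
Variable R : realType.
Local Notation C := R[i].
Local Open Scope complex_scope.

Definition psdmx n (A : 'M[C]_n) := forall v : 'rV[C]_n, 0 <= (v *m A *m v ^t*) ord0 ord0.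

Lemma density_hermitian n (rho : 'M[C]_n) : density rho -> rho ^t* = rho.
Proof. by rewrite -map_trmx => -[]. Qed.

Lemma density_psdmx n (rho : 'M[C]_n) : density rho -> psdmx rho.
Proof. by move=> [_ [rho_psd _]] v; rewrite -map_trmx. Qed.

Lemma trmxC_mul k l n (A : 'M[C]_(k, l)) (B : 'M[C]_(l, n)) : (A *m B) ^t* = B ^t* *m A ^t*.
Proof. by rewrite trmx_mul map_mxM. Qed.

Lemma trmxC_real_comb k l (s t : R) (A B : 'M[C]_(k, l)) :
  (s%:C *: A + t%:C *: B) ^t* = s%:C *: A ^t* + t%:C *: B ^t*.
Proof.
have conj_real x : conjC (x%:C : C) = x%:C := conjc_real x.
by apply/matrixP => i j; rewrite !mxE rmorphD !rmorphM /= !conj_real.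
Qed.

Lemma psdmx_conj k n (A : 'M[C]_n) (M : 'M[C]_(k, n)) : psdmx A -> psdmx (M *m A *m M ^t*).
Proof. by move=> A_psd v; have := A_psd (v *m M); rewrite trmxC_mul !mulmxA. Qed.

Lemma psdmx_sum (I : finType) n (A : I -> 'M[C]_n) :
  (forall i, psdmx (A i)) -> psdmx (\sum_i A i).
Proof.
move=> A_psd v; rewrite mulmx_sumr mulmx_suml summxE.
by apply: sumr_ge0 => i _; apply: A_psd.
Qed.

Lemma psdmx_diag_ge0 n (A : 'M[C]_n) k : psdmx A -> 0 <= A k k.
Proof.
move=> /(_ (delta_mx 0 k)); rewrite -rowE.
have -> : (delta_mx 0 k : 'rV[C]_n) ^t* = delta_mx k 0 by rewrite trmx_delta map_delta_mx.
by rewrite -colE !mxE.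
Qed.

Lemma complex_Re_ge0 (z : C) : 0 <= z -> 0 <= complex.Re z.
Proof. by rewrite lecE => /andP[]. Qed.

Lemma Re_realM (t : R) (z : C) : complex.Re (t%:C * z) = t * complex.Re z.
Proof. by case: z => a b /=; ring. Qed.

Lemma Re_mul_conj (z d : C) :
  complex.Re (z * d * conjC z) = complex.Re (z * conjC z) * complex.Re d.
Proof. by case: z => a b; case: d => c e /=; ring. Qed.

Lemma Re_mul_conj_ge0 (z : C) : 0 <= complex.Re (z * conjC z).
Proof. by case: z => a b /=; nra. Qed.

Lemma hermitian_spectral n (A : 'M[C]_n) : A ^t* = A ->
  A = (spectralmx A) ^t* *m diag_mx (spectral_diag A) *m spectralmx A.
Proof.
move=> A_herm; rewrite -invmx_unitary ?spectral_unitarymx //.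
by apply/orthomx_spectralP/normalmxP; rewrite A_herm.
Qed.

Lemma spectral_diag_conj n (A : 'M[C]_n) : A ^t* = A ->
  spectralmx A *m A *m (spectralmx A) ^t* = diag_mx (spectral_diag A).
Proof.
move=> /hermitian_spectral {2}->; have /unitarymxP U_unitary := spectral_unitarymx A.
by rewrite !mulmxA U_unitary mul1mx -mulmxA U_unitary mulmx1.
Qed.

Lemma vnS_spectral n (A : 'M[C]_n) : A \is normalmx ->
  vnS A = - \sum_k xlnx (complex.Re (spectral_diag A ord0 k)).
Proof.
move=> /orthomx_spectralP A_eq; rewrite /vnS /mxlog {1}A_eq.
have U_unit := spectral_unit A; set U := spectralmx A.
rewrite !mulmxA (mulmxK U_unit) mxtrace_mulC !mulmxA (mulmxV U_unit) mul1mx.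
rewrite mul_diag_mx /mxtrace raddf_sum; congr (- _); apply: eq_bigr => k _.
by rewrite !mxE eqxx mulr1n /xlnx; case: (spectral_diag A ord0 k) => a b /=; ring.
Qed.

Lemma xlnx_diag_le_neg_vnS n (A V : 'M[C]_n) : A ^t* = A -> psdmx A -> V \is unitarymx ->
  \sum_k xlnx (complex.Re ((V *m A *m V ^t*) k k)) <= - vnS A.
Proof.
move=> A_herm A_psd V_unitary.
rewrite vnS_spectral; last by apply/normalmxP; rewrite A_herm.
rewrite opprK {1}(hermitian_spectral A_herm).
set W := V *m (spectralmx A) ^t*; set d := spectral_diag A.
have W_unitary : W \is unitarymx by rewrite mul_unitarymx ?trmxC_unitary ?spectral_unitarymx.
have -> : V *m ((spectralmx A) ^t* *m diag_mx d *m spectralmx A) *m V ^t*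
    = W *m diag_mx d *m W ^t*.
  by rewrite trmxC_mul trmxCK !mulmxA.
clearbody W.
have diagE k : complex.Re ((W *m diag_mx d *m W ^t*) k k)
    = \sum_l complex.Re (W k l * conjC (W k l)) * complex.Re (d ord0 l).
  rewrite mxE raddf_sum; apply: eq_bigr => l _.
  by rewrite mul_mx_diag !mxE; apply: Re_mul_conj.
under eq_bigr do rewrite diagE.
apply: xlnx_doubly_stochastic => [k l|k|l|l].
- exact: Re_mul_conj_ge0.
- have /matrixP/(_ k k) := unitarymxP W_unitary.
  rewrite !mxE eqxx mulr1n => /(congr1 (@complex.Re R)); rewrite raddf_sum /= => <-.
  by apply: eq_bigr => l _; rewrite !mxE.
- have /matrixP/(_ l l) := mulmx1C (unitarymxP W_unitary).
  rewrite !mxE eqxx mulr1n => /(congr1 (@complex.Re R)); rewrite raddf_sum /= => <-.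
  by apply: eq_bigr => k _; rewrite !mxE mulrC.
- have := psdmx_diag_ge0 l (psdmx_conj (spectralmx A) A_psd).
  by rewrite spectral_diag_conj // mxE eqxx mulr1n => /complex_Re_ge0.
Qed.

Lemma vnS_concave n (A B : 'M[C]_n) t :
  A ^t* = A -> psdmx A -> B ^t* = B -> psdmx B -> 0 <= t -> t <= 1 ->
  t * vnS A + (1 - t) * vnS B <= vnS (t%:C *: A + (1 - t)%:C *: B).
Proof.
move=> A_herm A_psd B_herm B_psd t_ge0 t_le1.
set M := _ *: A + _ *: B; set U := spectralmx M.
have M_herm : M ^t* = M by rewrite trmxC_real_comb A_herm B_herm.
have U_unitary : U \is unitarymx := spectral_unitarymx M.
have diag_ge0 X k : psdmx X -> 0 <= complex.Re ((U *m X *m U ^t*) k k).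
  by move=> /(psdmx_conj U)/(psdmx_diag_ge0 k)/complex_Re_ge0.
have eigE k : complex.Re (spectral_diag M ord0 k) = t * complex.Re ((U *m A *m U ^t*) k k)
    + (1 - t) * complex.Re ((U *m B *m U ^t*) k k).
  have -> : spectral_diag M ord0 k = (U *m M *m U ^t*) k k.
    by rewrite spectral_diag_conj // mxE eqxx mulr1n.
  by rewrite /M mulmxDr mulmxDl -!scalemxAr -!scalemxAl !mxE raddfD /= !Re_realM.
have M_normal : M \is normalmx by apply/normalmxP; rewrite M_herm.
rewrite (vnS_spectral M_normal).
suff : \sum_k xlnx (complex.Re (spectral_diag M ord0 k)) <= t * - vnS A + (1 - t) * - vnS B.
  by rewrite lerNr => /le_trans; apply; rewrite !mulrN opprD.
under eq_bigr do rewrite eigE.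
have termwise k := xlnx_convex (diag_ge0 A k A_psd) (diag_ge0 B k B_psd) t_ge0 t_le1.
apply: le_trans (ler_sum _ (fun k _ => termwise k)) _.
rewrite big_split /= -!mulr_sumr.
by apply: lerD; apply: ler_wpM2l; rewrite ?subr_ge0 // xlnx_diag_le_neg_vnS.
Qed.

Lemma mxsub_conj k n (f : 'I_k -> 'I_n) (X : 'M[C]_n) :
  mxsub f f X = rowsub f 1%:M *m X *m (rowsub f 1%:M) ^t*.
Proof.
rewrite mul_rowsub_mx mul1mx trmx_mxsub trmx1 map_mxsub map_mx1.
by rewrite mulmx_colsub mulmx1 mxsubcr.
Qed.

Lemma ptraceR_sum_mxsub b r (X : 'M[C]_(b * r)) :
  ptraceR X = \sum_k mxsub (fun i => mxtens_index (i, k)) (fun i => mxtens_index (i, k)) X.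
Proof. by apply/matrixP => i i'; rewrite summxE mxE; apply: eq_bigr => k _; rewrite mxE. Qed.

Lemma ptraceR_psdmx b r (X : 'M[C]_(b * r)) : psdmx X -> psdmx (ptraceR X).
Proof.
move=> X_psd; rewrite ptraceR_sum_mxsub; apply: psdmx_sum => k.
by rewrite mxsub_conj; apply: psdmx_conj.
Qed.

Lemma ptraceR_hermitian b r (X : 'M[C]_(b * r)) : X ^t* = X -> (ptraceR X) ^t* = ptraceR X.
Proof.
move=> /matrixP X_herm; apply/matrixP => i i'; rewrite !mxE rmorph_sum.
by apply: eq_bigr => k _; rewrite -[in RHS]X_herm !mxE.
Qed.

Lemma ptraceR_comb b r (c d : C) (X Y : 'M[C]_(b * r)) :
  ptraceR (c *: X + d *: Y) = c *: ptraceR X + d *: ptraceR Y.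
Proof.
apply/matrixP => i i'; rewrite !mxE !mulr_sumr -big_split /=.
by apply: eq_bigr => k _; rewrite !mxE.
Qed.

Lemma Iq_rel_smooth a b r (rhoA : 'M[C]_a) :
  rel_smooth (@cplx R) 1 (fun rho : 'M[C]_(b * r) => - vnS rho) (Iq rhoA) (@density R (b * r)).
Proof.
move=> X Y [X_dens _] [Y_dens _] t t_ge0 t_le1.
have [X_herm X_psd] := (density_hermitian X_dens, density_psdmx X_dens).
have [Y_herm Y_psd] := (density_hermitian Y_dens, density_psdmx Y_dens).
have := vnS_concave (ptraceR_hermitian X_herm) (ptraceR_psdmx X_psd)
  (ptraceR_hermitian Y_herm) (ptraceR_psdmx Y_psd) t_ge0 t_le1.
rewrite /Iq /cplx ptraceR_comb; lra.
Qed.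

End QuantumCapacity.

Theorem mainTheorem8 (R : realType) :
  (forall (n m : nat) (p : 'rV[R]_m), prob_vec p ->
     rel_smooth (fun t : R => t) 1 (fun P : 'M[R]_(n, m) => - shannonH P)
       (Ic p) (@prob_mx R n m))
  /\
  (forall (a b r : nat) (rhoA : 'M[R[i]]_a), density rhoA ->
     rel_smooth (@cplx R) 1 (fun rho : 'M[R[i]]_(b * r) => - vnS rho)
       (Iq rhoA) (@density R (b * r))).
Proof.
by split=> [n m p _|a b r rhoA _]; [exact: Ic_rel_smooth | exact: Iq_rel_smooth].
Qed.
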